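(* Let $n,m\in\mathbb{N}$ and $f,g:\mathbb{F}_2^n\to\mathbb{F}_2$. Then for every $\mathbf{z}\in\mathbb{F}_2^n$, $$C^{(m)}_{f,g}(\mathbf{z})=\zeta_m^{wt(\mathbf{z})}\sum_{\mathbf{u}\in\mathbb{F}_2^n}\mathcal{H}^{(m)}_f(\mathbf{u})\,\overline{\mathcal{H}^{(m)}_g(\mathbf{u})}\,(-1)^{\mathbf{u}\cdot\mathbf{z}}.$$
   Context: $\zeta_m=e^{2\pi i/m}$; $wt$ is Hamming weight; $\mathbf{x}\cdot\mathbf{y}=\bigoplus_i x_iy_i\in\mathbb{F}_2$; $\mathbf{x}\odot\mathbf{y}=\sum_i x_iy_i$ computed in the integers. The $m$-Hadamard transform is $\mathcal{H}^{(m)}_f(\boldsymbol{\omega})=2^{-n/2}\sum_{\mathbf{x}\in\mathbb{F}_2^n}(-1)^{f(\mathbf{x})\oplus\mathbf{x}\cdot\boldsymbol{\omega}}\zeta_m^{wt(\mathbf{x})}$, and the $m$-crosscorrelation is $C^{(m)}_{f,g}(\mathbf{y})=\sum_{\mathbf{x}\in\mathbb{F}_2^n}(-1)^{f(\mathbf{x})\oplus g(\mathbf{x}\oplus\mathbf{y})}(\zeta_m^2)^{\mathbf{x}\odot\mathbf{y}}$. *)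

From mathcomp Require Import all_boot all_order all_algebra.
From mathcomp Require Import all_classical all_reals all_analysis.
From mathcomp Require Import complex.
Set Implicit Arguments. Unset Strict Implicit. Unset Printing Implicit Defensive.
Import Order.TTheory GRing.Theory Num.Theory.
Local Open Scope ring_scope.
Local Open Scope complex_scope.

(* Vectors of F_2^n are row vectors 'rV['F_2]_n; x (+) y is x + y. *)

Definition zeta (R : realType) (m : nat) : R[i] :=
  (cos (2 * pi / m%:R)) +i* (sin (2 * pi / m%:R)).

(* (-1)^a for a in F_2, as a complex number *)
Definition sgn (R : realType) (a : 'F_2) : R[i] := if a == 0 then 1 else -1.

Definition wt n (x : 'rV['F_2]_n) : nat := #|[set i | x ord0 i != 0]|.

Definition dotF2 n (x y : 'rV['F_2]_n) : 'F_2 := \sum_(i < n) x ord0 i * y ord0 i.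

(* integer inner product x (.) y = sum_i x_i y_i computed in the integers *)
Definition dotZ n (x y : 'rV['F_2]_n) : nat :=
  (\sum_(i < n) nat_of_bool ((x ord0 i != 0%R) && (y ord0 i != 0%R)))%N.

Definition mHadamard (R : realType) (m n : nat) (f : 'rV['F_2]_n -> 'F_2)
    (w : 'rV['F_2]_n) : R[i] :=
  ((Num.sqrt (2 : R))^-1 ^+ n)%:C *
  \sum_(x : 'rV['F_2]_n) sgn R (f x + dotF2 x w) * zeta R m ^+ wt x.

Definition mCrosscorr (R : realType) (m n : nat) (f g : 'rV['F_2]_n -> 'F_2)
    (y : 'rV['F_2]_n) : R[i] :=
  \sum_(x : 'rV['F_2]_n) sgn R (f x + g (x + y)) * (zeta R m ^+ 2) ^+ dotZ x y.

From mathcomp Require Import all_boot all_order all_algebra.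
From mathcomp Require Import all_classical all_reals all_analysis.
From mathcomp Require Import complex ring.
Set Implicit Arguments. Unset Strict Implicit. Unset Printing Implicit Defensive.
Import Order.TTheory GRing.Theory Num.Theory.
Local Open Scope ring_scope.
Local Open Scope complex_scope.

(* Expanding H_f(u) conj(H_g(u)) gives a double sum over x, y weighted by
   (-1)^(u.(x+y)).  Summed against (-1)^(u.z), the orthogonality relation
   sum_u (-1)^(u.w) = 2^n [w = 0] keeps only y = x + z, and the factor 2^n
   cancels the normalisation.  What remains is
   zeta^wt(z) zeta^wt(x) conj(zeta)^wt(x+z) = (zeta^2)^(x ⊙ z), because
   wt x + wt z = wt (x + z) + 2 (x ⊙ z) and zeta conj(zeta) = 1. *)

Lemma F2_cases (a : 'F_2) : a = 0 \/ a = 1.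
Proof. by case: a => [[|[|k]] //= ?]; [left | right]; apply: val_inj. Qed.

Section BinaryVectors.
Variable n : nat.
Implicit Types x y z u w : 'rV['F_2]_n.

Lemma oppr_rowF2 x : - x = x.
Proof. by apply/matrixP => i j; rewrite mxE oppr_pchar2 // pchar_Fp. Qed.

Lemma addrr_eq0_rowF2 x y z : (x + y + z == 0) = (y == x + z).
Proof. by rewrite addrAC addrC -{1}[x + z]oppr_rowF2 subr_eq0. Qed.

Lemma dotF2C u w : dotF2 u w = dotF2 w u.
Proof. by apply: eq_bigr => i _; rewrite mulrC. Qed.

Lemma dotF2Dr u x y : dotF2 u (x + y) = dotF2 u x + dotF2 u y.
Proof. by rewrite /dotF2 -big_split; apply: eq_bigr => i _; rewrite !mxE mulrDr. Qed.

Lemma dotF2_0r u : dotF2 u 0 = 0.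
Proof. by rewrite /dotF2 big1 // => i _; rewrite mxE mulr0. Qed.

Lemma wtE x : wt x = (\sum_i (x ord0 i != 0%R : nat))%N.
Proof.
by rewrite /wt cardsE -sum1_card big_mkcond; apply: eq_bigr => i _; rewrite unfold_in.
Qed.

Lemma wtD x z : (wt x + wt z = wt (x + z) + 2 * dotZ x z)%N.
Proof.
rewrite !wtE /dotZ big_distrr -!big_split; apply: eq_bigr => i _ /=.
by rewrite mxE; case: (F2_cases (x ord0 i)) => ->; case: (F2_cases (z ord0 i)) => ->.
Qed.

End BinaryVectors.

Lemma expr_wt_cross (C : comPzRingType) (a b : C) n (x z : 'rV['F_2]_n) :
  a * b = 1 -> a ^+ wt x * a ^+ wt z * b ^+ wt (x + z) = (a ^+ 2) ^+ dotZ x z.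
Proof.
by move=> ab1; rewrite -exprD wtD exprD mulrAC -exprMn ab1 expr1n mul1r exprM.
Qed.

Section Characters.
Variables (R : realType) (n : nat).
Implicit Types x y z u w : 'rV['F_2]_n.

Lemma sgnD (a b : 'F_2) : sgn R (a + b) = sgn R a * sgn R b.
Proof.
by case: (F2_cases a) => ->; case: (F2_cases b) => ->;
  rewrite /sgn ?addr0 ?add0r ?(addrr_pchar2 (pchar_Fp _)) //= ?mulrNN ?mul1r ?mulr1.
Qed.

Lemma sgn_conj (a : 'F_2) : (sgn R a)^*%R = sgn R a.
Proof. by rewrite /sgn; case: ifP; rewrite ?rmorphN rmorph1. Qed.

Lemma sum_sgn_dotF2 w :
  \sum_u sgn R (dotF2 u w) = if w == 0 then (2 ^ n)%:R else 0.
Proof.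
have [->|] := eqVneq w 0.
  under eq_bigr do rewrite dotF2_0r /sgn eqxx.
  by rewrite sumr_const card_mx card_Fp // mul1n.
case: (pickP (fun i => w ord0 i != 0)) => [i wi0 _|w0]; last first.
  by case/eqP; apply/matrixP => a b; rewrite (ord1 a) mxE; apply/eqP/negbFE/w0.
pose e : 'rV['F_2]_n := delta_mx ord0 i.
have dot_e : dotF2 e w = 1.
  rewrite /dotF2 (bigD1 i) //= big1 => [|j ji]; last by rewrite mxE eqxx (negbTE ji) mul0r.
  by rewrite mxE !eqxx mul1r addr0; case: (F2_cases (w ord0 i)) wi0 => ->.
(* translating u by e flips every sign, so the sum is its own opposite *)
have sumN : \sum_u sgn R (dotF2 u w) = - \sum_u sgn R (dotF2 u w).
  rewrite {1}(reindex_inj (addrI e)) -sumrN; apply: eq_bigr => u _.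
  by rewrite dotF2C dotF2Dr dotF2C dot_e sgnD dotF2C /sgn /= mulN1r.
have : (\sum_u sgn R (dotF2 u w)) *+ 2 == 0 by rewrite mulr2n {1}sumN addNr.
by rewrite mulrn_eq0 => /eqP.
Qed.

Lemma sum_sgn_dotF2_conv (F : 'rV['F_2]_n -> 'rV['F_2]_n -> R[i]) z :
  \sum_u (\sum_x \sum_y F x y * sgn R (dotF2 u (x + y))) * sgn R (dotF2 u z) =
  (2 ^ n)%:R * \sum_x F x (x + z).
Proof.
have expand u : (\sum_x \sum_y F x y * sgn R (dotF2 u (x + y))) * sgn R (dotF2 u z) =
    \sum_x \sum_y F x y * sgn R (dotF2 u (x + y + z)).
  rewrite mulr_suml; apply: eq_bigr => x _; rewrite mulr_suml; apply: eq_bigr => y _.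
  by rewrite (dotF2Dr u (x + y)) sgnD mulrA.
rewrite (eq_bigr _ (fun u _ => expand u)) exchange_big mulr_sumr; apply: eq_bigr => x _.
rewrite exchange_big.
under eq_bigr => y _ do rewrite -mulr_sumr sum_sgn_dotF2 addrr_eq0_rowF2.
rewrite (bigD1 (x + z)) //= eqxx big1 ?addr0 1?mulrC // => y /negbTE ->.
by rewrite mulr0.
Qed.

End Characters.

Lemma mul_zeta_conj (R : realType) m : zeta R m * (zeta R m)^* = 1.
Proof.
apply/eqP; rewrite eq_complex /= mulrN opprK -!expr2 cos2Dsin2 eqxx /=.
by rewrite mulrN mulrC addNr.
Qed.

Lemma hadamard_scale_sqr (R : rcfType) n :
  ((Num.sqrt (2 : R))^-1 ^+ n)%:C ^+ 2 = ((2 ^ n)%:R)^-1 :> R[i].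
Proof.
rewrite -rmorphXn -exprM mulnC exprM exprVn sqr_sqrtr ?ler0n //.
by rewrite exprVn -natrX fmorphV rmorph_nat.
Qed.

Section HadamardProduct.
Variables (R : realType) (m n : nat).
Implicit Types (f g : 'rV['F_2]_n -> 'F_2) (u : 'rV['F_2]_n).

Lemma mHadamard_conj g u :
  (mHadamard R m g u)^*%R =
  ((Num.sqrt (2 : R))^-1 ^+ n)%:C *
  \sum_y sgn R (g y + dotF2 y u) * (zeta R m)^* ^+ wt y.
Proof.
rewrite rmorphM rmorph_sum; congr (_ * _); first exact: conjc_real.
by apply: eq_bigr => y _; rewrite rmorphM rmorphXn; congr (_ * _); exact: sgn_conj.
Qed.

Lemma mHadamard_mul_conj f g u :
  mHadamard R m f u * (mHadamard R m g u)^* =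
  ((2 ^ n)%:R)^-1 * \sum_x \sum_y
    sgn R (f x + g y) * zeta R m ^+ wt x * (zeta R m)^* ^+ wt y *
    sgn R (dotF2 u (x + y)).
Proof.
rewrite mHadamard_conj /mHadamard mulrACA -expr2 hadamard_scale_sqr; congr (_ * _).
rewrite mulr_suml; apply: eq_bigr => x _; rewrite mulr_sumr; apply: eq_bigr => y _.
rewrite dotF2Dr !sgnD (dotF2C x u) (dotF2C y u).
ring.
Qed.

End HadamardProduct.

Theorem theorem5 (R : realType) (n m : nat) (f g : 'rV['F_2]_n -> 'F_2)
    (z : 'rV['F_2]_n) :
  mCrosscorr R m f g z =
  zeta R m ^+ wt z *
  \sum_(u : 'rV['F_2]_n)
     mHadamard R m f u * (mHadamard R m g u)^* * sgn R (dotF2 u z).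
Proof.
under eq_bigr => u _ do rewrite mHadamard_mul_conj -mulrA.
rewrite -mulr_sumr (sum_sgn_dotF2_conv
  (fun x y => sgn R (f x + g y) * zeta R m ^+ wt x * (zeta R m)^* ^+ wt y)).
rewrite mulKf ?pnatr_eq0 ?expn_eq0 // /mCrosscorr mulr_sumr.
apply: eq_bigr => x _.
rewrite -(expr_wt_cross x z (mul_zeta_conj R m)).
ring.
Qed.
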